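(* Let $\mu=4m^2>0$ and let $\mathcal{M}(\tilde z,a)$ be the crossing-symmetric $2\to2$ scattering amplitude of identical scalars of mass $m$ in a unitary theory, admitting the crossing-symmetric dispersive representation and the power series expansion described in the context. Then for every real $a\in\left(-\frac{2\mu}{9},0\right)\cup\left(0,\frac{4\mu}{9}\right)$, $\alpha_1(a)\neq 0$ and $$\left|\frac{\alpha_n(a)\,a^{2n}}{\alpha_1(a)\,a^2}\right|\le n\qquad\text{for all } n\ge 2.$$
   Context: Shifted Mandelstam variables $s_1=s-\mu/3$, $s_2=t-\mu/3$, $s_3=u-\mu/3$ satisfy $s_1+s_2+s_3=0$. Crossing-symmetric variables $(z,a)$, $a$ real, are defined by $s_k=a-\frac{a(z-z_k)^3}{z^3-1}$, $k=1,2,3$, with $z_k$ the cube roots of unity, and $\tilde z=z^3$. The amplitude, written as $\mathcal{M}(\tilde z,a)$, is assumed to satisfy $$\mathcal{M}(\tilde z,a)=\alpha_0+\frac1\pi\int_{2\mu/3}^\infty\frac{ds_1'}{s_1'}\,\mathcal{A}\left(s_1';s_2^{(+)}(s_1',a)\right)H(s_1',\tilde z),$$ where $\alpha_0=\mathcal{M}(0,a)$, $H(s_1',\tilde z)=\frac{27a^2\tilde z(2s_1'-3a)}{27a^3\tilde z-27a^2\tilde z s_1'-(1-\tilde z)^2(s_1')^3}$, $s_2^{(+)}(s_1',a)=-\frac{s_1'}{2}\left[1-\left(\frac{s_1'+3a}{s_1'-a}\right)^{1/2}\right]$, and $\mathcal{A}(s_1;s_2)$ is the $s$-channel absorptive part;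 and $\mathcal{M}$ has a power series $\mathcal{M}(\tilde z,a)=\sum_{n\ge0}\alpha_n(a)a^{2n}\tilde z^n$ converging on $|\tilde z|<1$. Unitarity means: $\mathcal{A}\left(s_1;s_2^{(+)}(s_1,a)\right)=\Phi(s_1;\alpha)\sum_{\ell\ge0}(2\ell+2\alpha)a_\ell(s_1)C_\ell^{(\alpha)}\left(\sqrt{\xi(s_1,a)}\right)$ with $\alpha=(d-3)/2$ ($d$ the spacetime dimension), $\Phi>0$, $C_\ell^{(\alpha)}$ Gegenbauer polynomials, $\xi(s_1,a)=\left(1+\frac{2s_2^{(+)}(s_1,a)+2\mu/3}{s_1-2\mu/3}\right)^2$, and $0\le a_\ell(s_1)\le1$ for $s_1\ge2\mu/3$. *)

From Stdlib Require Import Reals.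
From Coquelicot Require Import Coquelicot.
Open Scope R_scope.

(* Gegenbauer polynomials C_l^{(al)}(x), via the standard three-term recurrence
   C_0 = 1, C_1 = 2 al x,
   (n+1) C_{n+1} = 2 (n+al) x C_n - (n + 2 al - 1) C_{n-1}. *)
Fixpoint gegen_pair (al x : R) (n : nat) : R * R :=
  match n with
  | O => (1, 2 * al * x)
  | S k => let (c0, c1) := gegen_pair al x k in
           (c1, (2 * (INR k + 1 + al) * x * c1 - (INR k + 2 * al) * c0) / (INR k + 2))
  end.
Definition gegenbauer (n : nat) (al x : R) : R := fst (gegen_pair al x n).

Definition gegen_index (d : nat) : R := (INR d - 3) / 2.

Definition s2plus (s1 a : R) : R :=
  - s1 / 2 * (1 - sqrt ((s1 + 3 * a) / (s1 - a))).

Definition xi (mu s1 a : R) : R :=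
  (1 + (2 * s2plus s1 a + 2 * mu / 3) / (s1 - 2 * mu / 3)) ^ 2.

Definition Hker (a s : R) (z : C) : C :=
  ((27 * a ^ 2 * (2 * s - 3 * a))%R * z /
   ((27 * a ^ 3)%R * z - (27 * a ^ 2 * s)%R * z - (1 - z) * (1 - z) * (s ^ 3)%R))%C.

(* Unitarity makes the absorptive part nonnegative on the cut, since the Gegenbauer
   polynomials C_l^(alpha) with alpha >= 1/2 are nonnegative at arguments >= 1.  The
   imaginary part of the kernel H(s, z) has the sign of -Im z on the unit disk, hence
   Im (M(z) - M(0)) <= 0 on the upper half disk and is odd under z -> conj z: -M is
   typically real.  Expanding Im M(r e^(it)) in a Fourier series, the cosine
   coefficients r^n Im c_n vanish by oddness, and the sine coefficients r^n Re c_n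
   satisfy |r^n Re c_n| <= n (- r Re c_1), because Im M(r e^(it)) - Im M(0) has the
   sign of -sin t and |sin (n t)| <= n |sin t|.  Letting r -> 1 gives
   |c_n| <= n |c_1|, so c_1 <> 0 unless M is constant. *)

From Stdlib Require Import Reals Lra Psatz.
From Coquelicot Require Import Coquelicot.
Open Scope R_scope.

Lemma gegen_pair_nonneg_increasing (al x : R) (n : nat) :
  1/2 <= al -> 1 <= x -> 0 <= fst (gegen_pair al x n) <= snd (gegen_pair al x n).
Proof.
  intros Hal Hx. induction n as [|k IH]; simpl; [nra|].
  destruct (gegen_pair al x k) as [c0 c1]; simpl in *.
  assert (Hk := pos_INR k).
  split; [lra|].
  apply (Rmult_le_reg_r (INR k + 2)); [lra|].
  unfold Rdiv. rewrite Rmult_assoc, Rinv_l by lra.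
  assert (0 <= (INR k + 1 + al) * ((x - 1) * c1)) by (apply Rmult_le_pos; nra).
  assert (0 <= (INR k + 2 * al) * (c1 - c0)) by (apply Rmult_le_pos; lra).
  lra.
Qed.

Lemma gegenbauer_ge0 (n : nat) (al x : R) :
  1/2 <= al -> 1 <= x -> 0 <= gegenbauer n al x.
Proof. intros Hal Hx. apply (gegen_pair_nonneg_increasing al x n Hal Hx). Qed.

Lemma is_series_ge0 (u : nat -> R) (l : R) :
  (forall n, 0 <= u n) -> is_series u l -> 0 <= l.
Proof.
  intros Hu Hl.
  apply (is_lim_seq_le (fun _ => 0) (sum_n u) 0 l); [|apply is_lim_seq_const|exact Hl].
  intros N. rewrite sum_n_Reals. now apply cond_pos_sum.
Qed.

Lemma partial_wave_sum_ge0 (al x : R) (pw : nat -> R) (S : R) :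
  1/2 <= al -> 1 <= x -> (forall l, 0 <= pw l) ->
  is_series (fun l => (2 * INR l + 2 * al) * pw l * gegenbauer l al x) S -> 0 <= S.
Proof.
  intros Hal Hx Hpw. apply is_series_ge0. intros l.
  assert (Hl := pos_INR l). assert (Hg := gegenbauer_ge0 l al x Hal Hx).
  assert (Hp := Hpw l). apply Rmult_le_pos; [apply Rmult_le_pos|]; lra.
Qed.

Lemma s2plus_lower_bound (s0 s a : R) :
  0 < s0 + 3 * a -> a < s0 -> s0 <= s -> 0 <= 2 * s2plus s a + s0.
Proof.
  intros Ha1 Ha2 Hs. unfold s2plus.
  assert (Hsa : 0 < s - a) by lra.
  assert (Hpos : 0 <= (s + 3 * a) / (s - a)) by (apply Rdiv_le_0_compat; lra).
  assert (Hsq : (s - s0) ^ 2 <= s ^ 2 * ((s + 3 * a) / (s - a))).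
  { apply (Rmult_le_reg_r (s - a)); [lra|].
    replace (s ^ 2 * ((s + 3 * a) / (s - a)) * (s - a)) with (s ^ 2 * (s + 3 * a)) by (field; lra).
    (* [s^2 (s + 3a) - (s - s0)^2 (s - a)] is the sum of the three terms below. *)
    assert (0 <= s0 ^ 2 * (s0 + 3 * a)) by (apply Rmult_le_pos; nra).
    assert (0 <= 3 * s0 * (s - s0) * (s0 + 2 * a)) by (apply Rmult_le_pos; [apply Rmult_le_pos|]; nra).
    assert (0 <= (s - s0) ^ 2 * (2 * s0 + 4 * a)) by (apply Rmult_le_pos; nra).
    nra. }
  apply sqrt_le_1_alt in Hsq.
  rewrite sqrt_pow2, sqrt_mult, sqrt_pow2 in Hsq by (try apply pow_le; lra).
  lra.
Qed.

Lemma sqrt_xi_ge1 (mu s a : R) :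
  0 < 2 * mu / 3 + 3 * a -> a < 2 * mu / 3 -> 2 * mu / 3 <= s -> 1 <= sqrt (xi mu s a).
Proof.
  intros Ha1 Ha2 Hs. unfold xi.
  assert (Hnum := s2plus_lower_bound (2 * mu / 3) s a Ha1 Ha2 Hs).
  assert (0 <= (2 * s2plus s a + 2 * mu / 3) / (s - 2 * mu / 3)).
  { destruct (Req_dec s (2 * mu / 3)) as [->|Hne].
    - rewrite Rminus_diag, Rdiv_0_r. lra.
    - apply Rdiv_le_0_compat; lra. }
  rewrite sqrt_pow2; lra.
Qed.

Lemma absorptive_part_ge0 (d : nat) (mu a : R) (A : R -> R -> R) (Phi : R -> R)
    (pw : nat -> R -> R) :
  (4 <= d)%nat -> 0 < 2 * mu / 3 + 3 * a -> a < 2 * mu / 3 ->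
  (forall s : R, 2 * mu / 3 <= s ->
     0 < Phi s /\
     (forall l : nat, 0 <= pw l s <= 1) /\
     exists S : R,
       is_series (fun l : nat =>
                    (2 * INR l + 2 * gegen_index d) * pw l s
                    * gegenbauer l (gegen_index d) (sqrt (xi mu s a))) S /\
       A s (s2plus s a) = Phi s * S) ->
  forall s, 2 * mu / 3 <= s -> 0 <= A s (s2plus s a).
Proof.
  intros Hd Ha1 Ha2 Hunit s Hs.
  destruct (Hunit s Hs) as [HPhi [Hpw [S [HS ->]]]].
  assert (Hal : 1/2 <= gegen_index d).
  { unfold gegen_index. apply le_INR in Hd. simpl in Hd. lra. }
  apply Rmult_le_pos; [lra|].
  apply (partial_wave_sum_ge0 _ _ (fun l => pw l s) S Hal (sqrt_xi_ge1 mu s a Ha1 Ha2 Hs));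
    [intros l; apply Hpw | exact HS].
Qed.

Definition Hker_den (a s : R) (z : C) : C :=
  ((27 * a ^ 3)%R * z - (27 * a ^ 2 * s)%R * z - (1 - z) * (1 - z) * (s ^ 3)%R)%C.

Lemma Im_Hker (a s : R) (z : C) :
  Im (Hker a s z) =
  - (27 * a ^ 2 * (2 * s - 3 * a) * s ^ 3) * Im z * (1 - Cmod z ^ 2) / Cmod (Hker_den a s z) ^ 2.
Proof.
  rewrite !Cmod2_alt. unfold Hker, Hker_den. destruct z as [x y].
  unfold Cdiv, Cmult, Cinv, Cminus, Cplus, Copp, RtoC, Re, Im, Rdiv. cbn [fst snd].
  match goal with |- context [/ ?q] => generalize (/ q) end.
  intros iq. ring.
Qed.

Lemma Rinv_ge0 (x : R) : 0 <= x -> 0 <= / x.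
Proof.
  intros [Hx|<-]; [now left; apply Rinv_0_lt_compat|]. rewrite Rinv_0. apply Rle_refl.
Qed.

Lemma Cconj_RtoC (r : R) : Cconj (RtoC r) = RtoC r.
Proof. unfold Cconj, RtoC; cbn. f_equal; ring. Qed.

(* Unlike [Cinv_conj], no [w <> 0] is needed, as [/ 0 = 0] on both sides. *)
Lemma Cconj_Cinv (w : C) : Cconj (/ w) = (/ Cconj w)%C.
Proof.
  destruct w as [x y]. unfold Cconj, Cinv. cbn [fst snd].
  replace ((- y) ^ 2) with (y ^ 2) by ring. f_equal. unfold Rdiv. ring.
Qed.

Lemma Hker_conj (a s : R) (z : C) : Hker a s (Cconj z) = Cconj (Hker a s z).
Proof.
  unfold Hker, Cdiv.
  rewrite !Cmult_conj, Cconj_Cinv, !Cminus_conj, !Cmult_conj, !Cminus_conj, !Cconj_RtoC.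
  reflexivity.
Qed.

Lemma Im_RtoC_mult (r : R) (w : C) : Im (RtoC r * w)%C = r * Im w.
Proof. destruct w as [x y]. unfold Cmult, RtoC, Im; cbn. ring. Qed.

Lemma is_RInt_gen_Im {Fa Fb : (R -> Prop) -> Prop} {FFa : Filter Fa} {FFb : Filter Fb}
    (f : R -> C) (l : C) :
  is_RInt_gen f Fa Fb l -> is_RInt_gen (fun t => Im (f t)) Fa Fb (Im l).
Proof.
  intros H P [eps HP].
  assert (HQ : locally l (fun w : C => ball (Im l) eps (Im w))) by (exists eps; now intros w [_ Hw]).
  specialize (H _ HQ). unfold filtermapi in *.
  eapply filter_imp; [|exact H].
  intros ab [y [Hy1 Hy2]]. exists (Im y). split; [|exact (HP _ Hy2)].
  exact (is_RInt_fct_extend_snd (U := R_NormedModule) (V := R_NormedModule) f _ _ y Hy1).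
Qed.

Lemma is_RInt_gen_ge0 (g : R -> R) (s0 l : R) :
  (forall s, s0 <= s -> 0 <= g s) ->
  is_RInt_gen g (at_point s0) (Rbar_locally p_infty) l -> 0 <= l.
Proof.
  intros Hg Hl.
  assert (Hprod : forall P : R * R -> Prop, (forall y, s0 < y -> P (s0, y)) ->
      filter_prod (at_point s0) (Rbar_locally p_infty) P).
  { intros P HP. apply (Filter_prod _ _ _ (fun x => x = s0) (fun y => s0 < y)).
    - reflexivity.
    - now exists s0.
    - intros x y -> Hy. now apply HP. }
  enough (norm l <= l) by (assert (0 <= norm l) by apply norm_ge_0; lra).
  apply (RInt_gen_norm (V := R_CompleteNormedModule) (Fa := at_point s0)
           (Fb := Rbar_locally p_infty) g g l l); [| |exact Hl|exact Hl].
  - apply Hprod. intros y Hy. simpl. lra.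
  - apply Hprod. intros y Hy s Hs. simpl in Hs.
    rewrite <- (Rabs_pos_eq (g s)) at 2 by (apply Hg; lra). apply Rle_refl.
Qed.

Section Dispersion.

Variables (A : R -> R -> R) (M : C -> R -> C) (a s0 : R).
Hypothesis s0_pos : 0 < s0.
Hypothesis a_small : 3 * a <= 2 * s0.
Hypothesis A_ge0 : forall s, s0 <= s -> 0 <= A s (s2plus s a).
Hypothesis M_dispersion : forall z : C, Cmod z < 1 ->
  exists I : C,
    is_RInt_gen (fun s : R => ((A s (s2plus s a) / s)%R * Hker a s z)%C)
                (at_point s0) (Rbar_locally p_infty) I /\
    M z a = (M 0%C a + (/ PI)%R * I)%C.

Lemma Im_dispersion_integrand_le0 (z : C) (s : R) :
  Cmod z < 1 -> 0 <= Im z -> s0 <= s ->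
  Im ((A s (s2plus s a) / s)%R * Hker a s z)%C <= 0.
Proof.
  intros Hz Hy Hs. rewrite Im_RtoC_mult, Im_Hker.
  assert (HAs : 0 <= A s (s2plus s a) / s) by (apply Rdiv_le_0_compat; [apply A_ge0|]; lra).
  assert (Hk : 0 <= 27 * a ^ 2 * (2 * s - 3 * a) * s ^ 3)
    by (apply Rmult_le_pos; [apply Rmult_le_pos|apply pow_le]; nra).
  assert (Hz2 : 0 <= 1 - Cmod z ^ 2) by (assert (0 <= Cmod z) by apply Cmod_ge_0; nra).
  assert (Hd : 0 <= / Cmod (Hker_den a s z) ^ 2) by apply Rinv_ge0, pow2_ge_0.
  set (K := 27 * a ^ 2 * (2 * s - 3 * a) * s ^ 3) in *.
  set (D := / Cmod (Hker_den a s z) ^ 2) in *.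
  assert (0 <= A s (s2plus s a) / s * (K * Im z * (1 - Cmod z ^ 2) * D))
    by (apply Rmult_le_pos; [|apply Rmult_le_pos; [apply Rmult_le_pos; [apply Rmult_le_pos|]|]];
        assumption).
  unfold Rdiv at 2. fold D. lra.
Qed.

Lemma Im_dispersion_integrand_conj (z : C) (s : R) :
  Im ((A s (s2plus s a) / s)%R * Hker a s (Cconj z))%C
  = - Im ((A s (s2plus s a) / s)%R * Hker a s z)%C.
Proof. rewrite Hker_conj, !Im_RtoC_mult, im_conj. ring. Qed.

Lemma Im_dispersion (z : C) (I : C) :
  M z a = (M 0%C a + (/ PI)%R * I)%C -> Im (M z a) - Im (M 0%C a) = / PI * Im I.
Proof. intros ->. destruct I as [x y]. unfold Cplus, Cmult, RtoC, Im; cbn. ring. Qed.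

Lemma dispersion_Im_le (z : C) :
  Cmod z < 1 -> 0 <= Im z -> Im (M z a) <= Im (M 0%C a).
Proof.
  intros Hz Hy. destruct (M_dispersion z Hz) as [I [HI HM]].
  apply Im_dispersion in HM.
  apply is_RInt_gen_Im, (is_RInt_gen_opp (Fa := at_point s0) (Fb := Rbar_locally p_infty)) in HI.
  apply is_RInt_gen_ge0 in HI.
  - assert (0 < / PI) by apply Rinv_0_lt_compat, PI_RGT_0.
    change (0 <= - Im I) in HI. nra.
  - intros s Hs. change (0 <= - Im ((A s (s2plus s a) / s)%R * Hker a s z)%C).
    assert (H := Im_dispersion_integrand_le0 z s Hz Hy Hs). lra.
Qed.

Lemma dispersion_Im_conj (z : C) :
  Cmod z < 1 -> Im (M (Cconj z) a) - Im (M 0%C a) = - (Im (M z a) - Im (M 0%C a)).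
Proof.
  intros Hz. assert (Hzc : Cmod (Cconj z) < 1) by now rewrite Cmod_conj.
  destruct (M_dispersion z Hz) as [I [HI HM]].
  destruct (M_dispersion (Cconj z) Hzc) as [J [HJ HMc]].
  rewrite (Im_dispersion _ _ HM), (Im_dispersion _ _ HMc).
  apply is_RInt_gen_Im, (is_RInt_gen_opp (Fa := at_point s0) (Fb := Rbar_locally p_infty)) in HI.
  apply is_RInt_gen_Im in HJ.
  apply (is_RInt_gen_ext (Fa := at_point s0) (Fb := Rbar_locally p_infty) _
           (fun s => Im ((A s (s2plus s a) / s)%R * Hker a s (Cconj z))%C)) in HI.
  - rewrite <- (is_RInt_gen_unique _ _ HJ), (is_RInt_gen_unique _ _ HI).
    change (/ PI * - Im I = - (/ PI * Im I)). ring.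
  - apply filter_forall. intros ab s _. rewrite Im_dispersion_integrand_conj. reflexivity.
Qed.

End Dispersion.

Lemma is_RInt_ext_eq (f g : R -> R) (a b If Ig : R) :
  (forall t, f t = g t) -> If = Ig -> is_RInt f a b If -> is_RInt g a b Ig.
Proof. intros Hfg <- Hf. exact (is_RInt_ext f g a b If (fun t _ => Hfg t) Hf). Qed.

Lemma is_RInt_lincomb (f g : R -> R) (a b If Ig k l : R) :
  is_RInt f a b If -> is_RInt g a b Ig ->
  is_RInt (fun t => k * f t + l * g t) a b (k * If + l * Ig).
Proof.
  intros Hf Hg.
  exact (is_RInt_plus (V := R_NormedModule) _ _ a b _ _
           (is_RInt_scal _ _ _ k _ Hf) (is_RInt_scal _ _ _ l _ Hg)).
Qed.

Lemma is_RInt_const_R (c a b : R) : is_RInt (fun _ => c) a b ((b - a) * c).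
Proof. exact (is_RInt_const (V := R_NormedModule) a b c). Qed.

Lemma is_RInt_sum_n (F : nat -> R -> R) (I : nat -> R) (a b : R) (N : nat) :
  (forall m, is_RInt (F m) a b (I m)) ->
  is_RInt (fun t => sum_n (fun m => F m t) N) a b (sum_n I N).
Proof.
  intros HF. induction N as [|N IH].
  - apply (is_RInt_ext_eq (F 0%nat) _ _ _ (I 0%nat)); [intros; now rewrite sum_O | now rewrite sum_O | apply HF].
  - eapply is_RInt_ext_eq; [| |exact (is_RInt_lincomb _ _ _ _ _ _ 1 1 IH (HF (S N)))].
    + intros t. rewrite sum_Sn. unfold plus; simpl. ring.
    + rewrite sum_Sn. unfold plus; simpl. ring.
Qed.

Lemma is_RInt_sin_mul (k : R) : is_RInt (fun t => sin (k * t)) (-PI) PI 0.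
Proof.
  destruct (Req_dec k 0) as [->|Hk].
  - eapply is_RInt_ext_eq; [| |exact (is_RInt_const_R 0 (-PI) PI)].
    + intros t. now rewrite Rmult_0_l, sin_0.
    + ring.
  - replace 0 with (minus (- cos (k * PI) / k) (- cos (k * - PI) / k)).
    2:{ unfold minus, plus, opp; simpl. rewrite <- Ropp_mult_distr_r, cos_neg. field. exact Hk. }
    apply (is_RInt_derive (V := R_CompleteNormedModule) (fun t => - cos (k * t) / k)).
    + intros x _. auto_derive; [easy|]. field. exact Hk.
    + intros x _. apply continuity_pt_filterlim. reg.
Qed.

Lemma is_RInt_cos_mul (k : R) :
  k <> 0 -> sin (k * PI) = 0 -> is_RInt (fun t => cos (k * t)) (-PI) PI 0.
Proof.
  intros Hk HkPI.
  replace 0 with (minus (sin (k * PI) / k) (sin (k * - PI) / k)).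
  2:{ unfold minus, plus, opp; simpl. rewrite <- Ropp_mult_distr_r, sin_neg, HkPI. field. exact Hk. }
  apply (is_RInt_derive (V := R_CompleteNormedModule) (fun t => sin (k * t) / k)).
  - intros x _. auto_derive; [easy|]. field. exact Hk.
  - intros x _. apply continuity_pt_filterlim. reg.
Qed.

Lemma is_RInt_cos_nat_diff (m n : nat) :
  is_RInt (fun t => cos ((INR m - INR n) * t)) (-PI) PI (if (m =? n)%nat then 2 * PI else 0).
Proof.
  destruct (Nat.eqb_spec m n) as [->|Hmn].
  - eapply is_RInt_ext_eq; [| |exact (is_RInt_const_R 1 (-PI) PI)].
    + intros t. now rewrite Rminus_diag, Rmult_0_l, cos_0.
    + ring.
  - apply is_RInt_cos_mul.
    + intros H. apply Hmn, INR_eq. lra.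
    + apply sin_eq_0_1. exists (Z.of_nat m - Z.of_nat n)%Z.
      now rewrite minus_IZR, <- !INR_IZR_INZ.
Qed.

Lemma is_RInt_sin_sin (m n : nat) : (1 <= n)%nat ->
  is_RInt (fun t => sin (INR m * t) * sin (INR n * t)) (-PI) PI
    (if (m =? n)%nat then PI else 0).
Proof.
  intros Hn.
  eapply is_RInt_ext_eq; [| |exact (is_RInt_lincomb _ _ _ _ _ _ (1/2) (-1/2)
    (is_RInt_cos_nat_diff m n) (is_RInt_cos_nat_diff (m + n) 0))].
  - intros t; cbv beta. rewrite plus_INR, Rminus_0_r, !Rmult_minus_distr_r, Rmult_plus_distr_r.
    rewrite cos_minus, cos_plus. field.
  - replace (m + n =? 0)%nat with false by (symmetry; apply Nat.eqb_neq; lia).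
    destruct (m =? n)%nat; field.
Qed.

Lemma is_RInt_cos_cos (m n : nat) : (1 <= n)%nat ->
  is_RInt (fun t => cos (INR m * t) * cos (INR n * t)) (-PI) PI
    (if (m =? n)%nat then PI else 0).
Proof.
  intros Hn.
  eapply is_RInt_ext_eq; [| |exact (is_RInt_lincomb _ _ _ _ _ _ (1/2) (1/2)
    (is_RInt_cos_nat_diff m n) (is_RInt_cos_nat_diff (m + n) 0))].
  - intros t; cbv beta. rewrite plus_INR, Rminus_0_r, !Rmult_minus_distr_r, Rmult_plus_distr_r.
    rewrite cos_minus, cos_plus. field.
  - replace (m + n =? 0)%nat with false by (symmetry; apply Nat.eqb_neq; lia).
    destruct (m =? n)%nat; field.
Qed.

Lemma is_RInt_cos_sin (m n : nat) :
  is_RInt (fun t => cos (INR m * t) * sin (INR n * t)) (-PI) PI 0.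
Proof.
  eapply is_RInt_ext_eq; [| |exact (is_RInt_lincomb _ _ _ _ _ _ (1/2) (1/2)
    (is_RInt_sin_mul (INR n - INR m)) (is_RInt_sin_mul (INR n + INR m)))].
  - intros t; cbv beta. rewrite Rmult_plus_distr_r, (Rmult_minus_distr_r (INR n)), sin_minus, sin_plus.
    field.
  - ring.
Qed.

Lemma sum_n_kronecker (v : nat -> R) (n N : nat) : (n <= N)%nat ->
  sum_n (fun m => if (m =? n)%nat then v m else 0) N = v n.
Proof.
  intros HnN. induction N as [|N IH].
  - rewrite sum_O. replace n with 0%nat by lia. reflexivity.
  - rewrite sum_Sn. destruct (Nat.eqb_spec (S N) n) as [<-|Hne].
    + rewrite (sum_n_ext_loc _ (fun _ => 0)), sum_n_const.
      * unfold plus; simpl. ring.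
      * intros m Hm. replace (m =? S N)%nat with false by (symmetry; apply Nat.eqb_neq; lia).
        reflexivity.
    + rewrite IH by lia. unfold plus; simpl. ring.
Qed.

Definition trig_poly (a b : nat -> R) (N : nat) (t : R) : R :=
  sum_n (fun m => a m * sin (INR m * t) + b m * cos (INR m * t)) N.

Lemma trig_poly_mul_r (a b : nat -> R) (N : nat) (t x : R) :
  trig_poly a b N t * x = sum_n (fun m => a m * (sin (INR m * t) * x) + b m * (cos (INR m * t) * x)) N.
Proof.
  unfold trig_poly. rewrite Rmult_comm, <- (sum_n_mult_l (K := R_Ring)).
  apply sum_n_ext. intros m. unfold mult; simpl. ring.
Qed.

Lemma is_RInt_trig_poly_sin (a b : nat -> R) (N n : nat) : (1 <= n <= N)%nat ->
  is_RInt (fun t => trig_poly a b N t * sin (INR n * t)) (-PI) PI (PI * a n).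
Proof.
  intros Hn.
  eapply is_RInt_ext_eq; [| |apply (is_RInt_sum_n
    (fun m t => a m * (sin (INR m * t) * sin (INR n * t)) + b m * (cos (INR m * t) * sin (INR n * t)))
    (fun m => a m * (if (m =? n)%nat then PI else 0) + b m * 0))].
  - intros t. now rewrite trig_poly_mul_r.
  - rewrite <- (sum_n_kronecker (fun m => PI * a m) n N) by lia.
    apply sum_n_ext. intros m. simpl. destruct (m =? n)%nat; ring.
  - intros m. apply is_RInt_lincomb; [apply is_RInt_sin_sin; lia | apply is_RInt_cos_sin].
Qed.

Lemma is_RInt_trig_poly_cos (a b : nat -> R) (N n : nat) : (1 <= n <= N)%nat ->
  is_RInt (fun t => trig_poly a b N t * cos (INR n * t)) (-PI) PI (PI * b n).
Proof.
  intros Hn.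
  eapply is_RInt_ext_eq; [| |apply (is_RInt_sum_n
    (fun m t => a m * (cos (INR n * t) * sin (INR m * t)) + b m * (cos (INR m * t) * cos (INR n * t)))
    (fun m => a m * 0 + b m * (if (m =? n)%nat then PI else 0)))].
  - intros t. rewrite trig_poly_mul_r. apply sum_n_ext. intros m. simpl. ring.
  - rewrite <- (sum_n_kronecker (fun m => PI * b m) n N) by lia.
    apply sum_n_ext. intros m. simpl. destruct (m =? n)%nat; ring.
  - intros m. apply is_RInt_lincomb; [apply is_RInt_cos_sin | apply is_RInt_cos_cos; lia].
Qed.

Lemma trig_poly_even_part (a b : nat -> R) (N : nat) (t : R) :
  trig_poly a b N t + trig_poly a b N (- t) = trig_poly (fun _ => 0) (fun m => 2 * b m) N t.
Proof.
  unfold trig_poly. rewrite <- (sum_n_plus (G := R_AbelianMonoid)).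
  apply sum_n_ext. intros m. unfold plus; simpl.
  rewrite <- Ropp_mult_distr_r, sin_neg, cos_neg. ring.
Qed.

Lemma Rabs_sin_nat_mul_le (n : nat) (t : R) : Rabs (sin (INR n * t)) <= INR n * Rabs (sin t).
Proof.
  induction n as [|n IH].
  - simpl. rewrite Rmult_0_l, sin_0, Rabs_R0. lra.
  - rewrite S_INR, Rmult_plus_distr_r, Rmult_1_l, sin_plus.
    eapply Rle_trans; [apply Rabs_triang|]. rewrite !Rabs_mult.
    assert (Rabs (cos t) <= 1) by apply Rabs_le, COS_bound.
    assert (Rabs (cos (INR n * t)) <= 1) by apply Rabs_le, COS_bound.
    assert (0 <= Rabs (sin (INR n * t))) by apply Rabs_pos.
    assert (0 <= Rabs (sin t)) by apply Rabs_pos.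
    nra.
Qed.

Lemma Rabs_mul_sin_nat_mul_le (v t e : R) (n : nat) :
  - e <= v * sin t -> 0 <= e ->
  Rabs (v * sin (INR n * t)) <= INR n * (v * sin t) + INR n * (2 * e).
Proof.
  intros Hlow He.
  assert (Habs : Rabs (v * sin t) <= v * sin t + 2 * e) by (apply Rabs_le; lra).
  assert (Hn := pos_INR n). assert (Hsn := Rabs_sin_nat_mul_le n t).
  assert (Rabs (v * sin (INR n * t)) <= INR n * Rabs (v * sin t)).
  { rewrite !Rabs_mult. assert (0 <= Rabs v) by apply Rabs_pos. nra. }
  nra.
Qed.

Section TrigApprox.

Variables (u : R -> R) (kappa : R) (a b : nat -> R) (N : nat) (e : R).
Hypothesis u_sign : forall t, (u t - kappa) * sin t <= 0.
Hypothesis u_odd : forall t, u (- t) - kappa = - (u t - kappa).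
Hypothesis u_approx : forall t, Rabs (u t - trig_poly a b N t) <= e.

Lemma approx_sin_coef_le (n : nat) :
  (1 <= n <= N)%nat -> Rabs (a n) <= INR n * (- a 1%nat + 4 * e).
Proof.
  intros Hn.
  assert (He : 0 <= e) by exact (Rle_trans _ _ _ (Rabs_pos _) (u_approx 0)).
  set (V t := kappa - trig_poly a b N t).
  assert (IV : forall k, (1 <= k <= N)%nat ->
             is_RInt (fun t => V t * sin (INR k * t)) (-PI) PI (- (PI * a k))).
  { intros k Hk.
    eapply is_RInt_ext_eq; [| |exact (is_RInt_lincomb _ _ _ _ _ _ kappa (-1)
      (is_RInt_sin_mul (INR k)) (is_RInt_trig_poly_sin a b N k Hk))].
    - intros t; cbv beta. unfold V. ring.
    - ring. }
  assert (Hpt : forall t, Rabs (V t * sin (INR n * t))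
                          <= INR n * (V t * sin (INR 1 * t)) + INR n * (2 * e) * 1).
  { intros t. rewrite Rmult_1_l, Rmult_1_r. apply Rabs_mul_sin_nat_mul_le; [|exact He].
    assert (Hs : Rabs (sin t) <= 1) by apply Rabs_le, SIN_bound.
    assert (Hu := u_approx t). assert (Hsg := u_sign t).
    assert (Herr : Rabs ((u t - trig_poly a b N t) * sin t) <= e).
    { rewrite Rabs_mult. assert (0 <= Rabs (u t - trig_poly a b N t)) by apply Rabs_pos. nra. }
    apply Rabs_le_between in Herr. unfold V. nra. }
  assert (HPI : -PI <= PI) by (assert (H := PI_RGT_0); lra).
  assert (H1N : (1 <= 1 <= N)%nat) by lia.
  assert (IB := is_RInt_lincomb _ _ _ _ _ _ (INR n) (INR n * (2 * e))
                  (IV 1%nat H1N) (is_RInt_const_R 1 (-PI) PI)).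
  assert (Hint := norm_RInt_le (fun t => V t * sin (INR n * t))
                    (fun t => INR n * (V t * sin (INR 1 * t)) + INR n * (2 * e) * 1) _ _ _ _ HPI
                    (fun t _ => Hpt t) (IV n Hn) IB).
  change (Rabs (- (PI * a n)) <= INR n * - (PI * a 1%nat) + INR n * (2 * e) * ((PI - - PI) * 1))
    in Hint.
  rewrite Rabs_Ropp, Rabs_mult, (Rabs_pos_eq PI) in Hint by (apply Rlt_le, PI_RGT_0).
  apply (Rmult_le_reg_l PI); [apply PI_RGT_0|]. lra.
Qed.

Lemma approx_cos_coef_le (n : nat) : (1 <= n <= N)%nat -> Rabs (b n) <= 2 * e.
Proof.
  intros Hn.
  set (E t := trig_poly (fun _ => 0) (fun m => 2 * b m) N t - 2 * kappa).
  assert (IE : is_RInt (fun t => E t * cos (INR n * t)) (-PI) PI (PI * (2 * b n))).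
  { assert (Hc := is_RInt_cos_nat_diff n 0).
    replace (n =? 0)%nat with false in Hc by (symmetry; apply Nat.eqb_neq; lia).
    eapply is_RInt_ext_eq; [| |exact (is_RInt_lincomb _ _ _ _ _ _ 1 (- 2 * kappa)
      (is_RInt_trig_poly_cos (fun _ => 0) (fun m => 2 * b m) N n Hn) Hc)].
    - intros t; cbv beta. unfold E. simpl INR. rewrite Rminus_0_r. ring.
    - cbv beta. ring. }
  (* the oddness of [u - kappa] makes the even part of the approximant [O(e)] *)
  assert (Hpt : forall t, Rabs (E t * cos (INR n * t)) <= 2 * e).
  { intros t. rewrite Rabs_mult.
    assert (HE : Rabs (E t) <= 2 * e).
    { unfold E. rewrite <- (trig_poly_even_part a b N t).
      assert (H1 := u_approx t). assert (H2 := u_approx (- t)). assert (Hodd := u_odd t).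
      apply Rabs_le_between in H1, H2. apply Rabs_le. lra. }
    assert (Hc : Rabs (cos (INR n * t)) <= 1) by apply Rabs_le, COS_bound.
    assert (0 <= Rabs (E t)) by apply Rabs_pos. nra. }
  assert (HPI : -PI <= PI) by (assert (H := PI_RGT_0); lra).
  assert (Hint := norm_RInt_le_const (fun t => E t * cos (INR n * t)) _ _ _ _ HPI
                    (fun t _ => Hpt t) IE).
  change (Rabs (PI * (2 * b n)) <= (PI - - PI) * (2 * e)) in Hint.
  rewrite !Rabs_mult, (Rabs_pos_eq PI), Rabs_pos_eq in Hint by (try apply Rlt_le, PI_RGT_0; lra).
  apply (Rmult_le_reg_l (2 * PI)); [assert (H := PI_RGT_0); lra|]. lra.
Qed.

End TrigApprox.

Lemma is_series_Re_Im (a : nat -> C) (l : C) :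
  is_series a l ->
  is_series (fun n => Re (a n)) (Re l) /\ is_series (fun n => Im (a n)) (Im l).
Proof.
  intros H.
  assert (Hsum : forall N, sum_n a N = (sum_n (fun n => Re (a n)) N, sum_n (fun n => Im (a n)) N)).
  { induction N as [|N IH]; [rewrite !sum_O; now destruct (a 0%nat)|].
    rewrite !sum_Sn, IH. reflexivity. }
  split; intros P [eps HP]; unfold filtermap.
  - apply (filter_imp (fun N => P (Re (sum_n a N)))); [intros N; now rewrite Hsum|].
    apply (H (fun w => P (Re w))). exists eps. intros w [Hw _]. exact (HP _ Hw).
  - apply (filter_imp (fun N => P (Im (sum_n a N)))); [intros N; now rewrite Hsum|].
    apply (H (fun w => P (Im w))). exists eps. intros w [_ Hw]. exact (HP _ Hw).
Qed.

Lemma Cmod_le_Rabs_Re_Im (w : C) : Cmod w <= Rabs (Re w) + Rabs (Im w).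
Proof.
  unfold Cmod. rewrite <- (sqrt_pow2 (Rabs (Re w) + Rabs (Im w))) by (apply Rplus_le_le_0_compat; apply Rabs_pos).
  apply sqrt_le_1_alt. rewrite <- (pow2_abs (fst w)), <- (pow2_abs (snd w)).
  assert (0 <= Rabs (Re w) * Rabs (Im w)) by (apply Rmult_le_pos; apply Rabs_pos).
  unfold Re, Im in *. nra.
Qed.

Lemma Rabs_Im_le_Cmod (w : C) : Rabs (Im w) <= Cmod w.
Proof. eapply Rle_trans; [apply Rmax_r | apply Rmax_Cmod]. Qed.

Lemma Cmod_Im_0 (w : C) : Im w = 0 -> Cmod w = Rabs (Re w).
Proof. destruct w as [x y]. unfold Im, Re; simpl. intros ->. apply Cmod_R. Qed.

Lemma series_tail_le (t : nat -> R) (l q : R) (N : nat) :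
  0 <= q < 1 -> (forall m, (N < m)%nat -> Rabs (t m) <= q ^ m) -> is_series t l ->
  Rabs (l - sum_n t N) <= q ^ S N / (1 - q).
Proof.
  intros Hq Ht Hl.
  assert (Htail : is_series (fun k => t (S N + k)%nat) (l - sum_n t N)).
  { apply is_series_incr_n; [lia|].
    replace l with (plus (l - sum_n t N) (sum_n t N)) in Hl; [exact Hl|].
    unfold plus; simpl. ring. }
  assert (Hgeom : is_series (fun k => q ^ S N * q ^ k) (q ^ S N * / (1 - q)))
    by (apply (is_series_scal_l (V := R_NormedModule)), is_series_geom; rewrite Rabs_pos_eq; lra).
  assert (Hdom : forall k, 0 <= Rabs (t (S N + k)%nat) <= q ^ S N * q ^ k).
  { intros k. split; [apply Rabs_pos|]. rewrite <- pow_add. apply Ht. lia. }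
  assert (Hex : ex_series (fun k => Rabs (t (S N + k)%nat))).
  { apply (ex_series_le (V := R_CompleteNormedModule) _ (fun k => q ^ S N * q ^ k));
      [|exact (ex_intro _ _ Hgeom)].
    intros k. change (Rabs (Rabs (t (S N + k)%nat)) <= q ^ S N * q ^ k).
    rewrite Rabs_Rabsolu. apply Hdom. }
  unfold Rdiv. rewrite <- (is_series_unique _ _ Htail), <- (is_series_unique _ _ Hgeom).
  eapply Rle_trans; [apply Series_Rabs, Hex | apply Series_le; [exact Hdom | exact (ex_intro _ _ Hgeom)]].
Qed.

Lemma pow_1_minus_ge (d : R) (n : nat) : 0 <= d <= 1 -> 1 - INR n * d <= (1 - d) ^ n.
Proof.
  intros Hd. induction n as [|n IH]; [simpl; lra|].
  rewrite S_INR. simpl.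
  assert (0 <= (1 - d) ^ n) by (apply pow_le; lra).
  assert (0 <= INR n * d * d) by (assert (Hn := pos_INR n); apply Rmult_le_pos; nra).
  nra.
Qed.

Lemma le_of_forall_pow_mul_le (X Y : R) (n : nat) :
  0 <= X -> (forall r, 0 < r < 1 -> X * r ^ n <= Y) -> X <= Y.
Proof.
  intros HX HXY. apply le_epsilon. intros eps Heps.
  assert (Hn := pos_INR n).
  set (d := eps / (INR n * X + eps + 1)).
  assert (Hden : 0 < INR n * X + eps + 1) by nra.
  assert (Hdden : d * (INR n * X + eps + 1) = eps) by (unfold d; field; lra).
  assert (Hd : 0 < d < 1) by (split; [apply Rdiv_lt_0_compat|]; nra).
  assert (Hnd : INR n * d * X <= eps) by nra.
  assert (Hbern := pow_1_minus_ge d n ltac:(lra)).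
  assert (H := HXY (1 - d) ltac:(lra)). nra.
Qed.

Lemma le_of_forall_le_add_geometric (X Y K q : R) (N0 : nat) :
  0 <= K -> 0 <= q < 1 ->
  (forall N, (N0 <= N)%nat -> X <= Y + K * (q ^ S N / (1 - q))) -> X <= Y.
Proof.
  intros HK Hq HXY. apply le_epsilon. intros eps Heps.
  destruct (pow_lt_1_zero q ltac:(rewrite Rabs_pos_eq; lra) (eps * (1 - q) / (K + 1)))
    as [M HM]; [apply Rdiv_lt_0_compat; nra|].
  set (N := Nat.max N0 M).
  specialize (HM (S N) ltac:(lia)). rewrite Rabs_pos_eq in HM by (apply pow_le; lra).
  set (e := q ^ S N / (1 - q)) in *.
  assert (He : e * (1 - q) = q ^ S N) by (unfold e; field; lra).
  assert (He0 : 0 <= e) by (apply Rdiv_le_0_compat; [apply pow_le|]; lra).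
  assert (HeK : e * (K + 1) < eps).
  { apply (Rmult_lt_reg_r (1 - q)); [lra|].
    apply (Rmult_lt_compat_r (K + 1)) in HM; [|lra].
    unfold Rdiv in HM. rewrite Rmult_assoc, Rinv_l, Rmult_1_r in HM by lra. nra. }
  assert (HN := HXY N ltac:(lia)). fold e in HN. nra.
Qed.

Definition polar (r t : R) : C := (r * cos t, r * sin t).

Lemma Cmod_polar (r t : R) : 0 <= r -> Cmod (polar r t) = r.
Proof.
  intros Hr. unfold Cmod, polar; cbn [fst snd].
  replace ((r * cos t) ^ 2 + (r * sin t) ^ 2) with (r ^ 2 * (sin t ^ 2 + cos t ^ 2)) by ring.
  rewrite <- !Rsqr_pow2, sin2_cos2, Rmult_1_r, Rsqr_pow2. now apply sqrt_pow2.
Qed.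

Lemma polar_conj (r t : R) : Cconj (polar r t) = polar r (- t).
Proof. unfold Cconj, polar; cbn. rewrite cos_neg, sin_neg. f_equal; ring. Qed.

Lemma pow_n_polar (r t : R) (m : nat) : pow_n (polar r t) m = polar (r ^ m) (INR m * t).
Proof.
  induction m as [|m IH].
  - unfold polar; simpl. rewrite Rmult_0_l, cos_0, sin_0, Rmult_1_l, Rmult_0_r. reflexivity.
  - change (pow_n (polar r t) (S m)) with (polar r t * pow_n (polar r t) m)%C.
    rewrite IH, S_INR. unfold polar, Cmult; cbn [fst snd].
    rewrite Rmult_plus_distr_r, Rmult_1_l, Rplus_comm, cos_plus, sin_plus. simpl. f_equal; ring.
Qed.

Lemma Im_mul_polar (w : C) (rho th : R) :
  Im (w * polar rho th)%C = rho * (Re w * sin th + Im w * cos th).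
Proof. destruct w as [x y]. unfold polar, Cmult, Re, Im; cbn. ring. Qed.

Lemma pow_n_RtoC (x : R) (m : nat) : pow_n (RtoC x) m = RtoC (x ^ m).
Proof.
  induction m as [|m IH]; [reflexivity|].
  change (pow_n (RtoC x) (S m)) with (RtoC x * pow_n (RtoC x) m)%C.
  rewrite IH. unfold Cmult, RtoC; cbn. f_equal; ring.
Qed.

Section TypicallyReal.

Variables (f : C -> C) (c : nat -> C).
Hypothesis f_series : forall z, Cmod z < 1 -> is_series (fun n => (c n * pow_n z n)%C) (f z).
Hypothesis Im_f_upper : forall z, Cmod z < 1 -> 0 <= Im z -> Im (f z) <= Im (f 0%C).
Hypothesis Im_f_conj : forall z, Cmod z < 1 ->
  Im (f (Cconj z)) - Im (f 0%C) = - (Im (f z) - Im (f 0%C)).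

(* The terms of the series at [r' = (1 + r) / 2] tend to 0, hence
   [Cmod (c m) * r ^ m <= (r / r') ^ m] eventually. *)
Lemma coef_geometric_bound (r : R) : 0 < r < 1 ->
  exists q N0, 0 <= q < 1 /\ forall m, (N0 <= m)%nat -> Cmod (c m) * r ^ m <= q ^ m.
Proof.
  intros Hr. set (r' := (1 + r) / 2).
  assert (Hr' : r < r' < 1) by (unfold r'; lra).
  assert (Hz : Cmod (RtoC r') < 1) by (rewrite Cmod_R, Rabs_pos_eq; lra).
  destruct (is_series_Re_Im _ _ (f_series _ Hz)) as [HRe HIm].
  assert (HRe0 := proj2 (is_lim_seq_spec _ _) (ex_series_lim_0 _ (ex_intro _ _ HRe))).
  assert (HIm0 := proj2 (is_lim_seq_spec _ _) (ex_series_lim_0 _ (ex_intro _ _ HIm))).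
  destruct (HRe0 (mkposreal (1/2) ltac:(lra))) as [N1 HN1].
  destruct (HIm0 (mkposreal (1/2) ltac:(lra))) as [N2 HN2].
  exists (r / r'), (Nat.max N1 N2). split.
  { split; [apply Rdiv_le_0_compat; lra|].
    apply (Rmult_lt_reg_r r'); [lra|]. unfold Rdiv. rewrite Rmult_assoc, Rinv_l; lra. }
  intros m Hm.
  specialize (HN1 m ltac:(lia)). specialize (HN2 m ltac:(lia)).
  change (Rabs (Re (c m * pow_n (RtoC r') m) - 0) < 1/2) in HN1.
  change (Rabs (Im (c m * pow_n (RtoC r') m) - 0) < 1/2) in HN2.
  rewrite Rminus_0_r in HN1, HN2.
  assert (Hterm := Cmod_le_Rabs_Re_Im (c m * pow_n (RtoC r') m)).
  rewrite Cmod_mult, pow_n_RtoC, Cmod_R, Rabs_pos_eq in Hterm by (apply pow_le; lra).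
  rewrite pow_n_RtoC in HN1, HN2.
  assert (Er : r ^ m = r' ^ m * (r / r') ^ m) by (rewrite <- Rpow_mult_distr; f_equal; field; lra).
  assert (0 <= (r / r') ^ m) by (apply pow_le, Rdiv_le_0_compat; lra).
  rewrite Er, <- Rmult_assoc. rewrite <- (Rmult_1_l ((r / r') ^ m)) at 2.
  apply Rmult_le_compat_r; lra.
Qed.

Lemma Im_f_polar_approx (r : R) : 0 < r < 1 ->
  exists q N0, 0 <= q < 1 /\ forall N t, (N0 <= N)%nat ->
    Rabs (Im (f (polar r t))
          - trig_poly (fun m => r ^ m * Re (c m)) (fun m => r ^ m * Im (c m)) N t)
    <= q ^ S N / (1 - q).
Proof.
  intros Hr. destruct (coef_geometric_bound r Hr) as [q [N0 [Hq Hc]]].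
  exists q, N0. split; [exact Hq|]. intros N t HN.
  assert (Hz : Cmod (polar r t) < 1) by (rewrite Cmod_polar; lra).
  replace (trig_poly _ _ N t) with (sum_n (fun m => Im (c m * pow_n (polar r t) m)%C) N).
  - apply series_tail_le; [exact Hq | | exact (proj2 (is_series_Re_Im _ _ (f_series _ Hz)))].
    intros m Hm. eapply Rle_trans; [apply Rabs_Im_le_Cmod|].
    rewrite Cmod_mult, pow_n_polar, Cmod_polar by (apply pow_le; lra).
    apply Hc. lia.
  - unfold trig_poly. apply sum_n_ext. intros m. rewrite pow_n_polar, Im_mul_polar. simpl. ring.
Qed.

Lemma Im_f_polar_sign (r t : R) : 0 < r < 1 ->
  (Im (f (polar r t)) - Im (f 0%C)) * sin t <= 0.
Proof.
  intros Hr.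
  assert (Hz : forall t, Cmod (polar r t) < 1) by (intros; rewrite Cmod_polar; lra).
  destruct (Rle_dec 0 (sin t)) as [Hs|Hs].
  - assert (Hup := Im_f_upper (polar r t) (Hz t) ltac:(simpl; nra)). nra.
  - assert (Hup := Im_f_upper (polar r (- t)) (Hz (- t)) ltac:(simpl; rewrite sin_neg; nra)).
    assert (Hc := Im_f_conj (polar r (- t)) (Hz (- t))).
    rewrite polar_conj, Ropp_involutive in Hc. nra.
Qed.

Lemma Im_f_polar_odd (r t : R) : 0 < r < 1 ->
  Im (f (polar r (- t))) - Im (f 0%C) = - (Im (f (polar r t)) - Im (f 0%C)).
Proof. intros Hr. rewrite <- polar_conj. apply Im_f_conj. rewrite Cmod_polar; lra. Qed.

Lemma coef_bound_on_circle (r : R) (n : nat) : 0 < r < 1 -> (1 <= n)%nat ->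
  Rabs (Re (c n)) * r ^ n <= INR n * (- r * Re (c 1%nat)) /\ Im (c n) = 0.
Proof.
  intros Hr Hn. destruct (Im_f_polar_approx r Hr) as [q [N0 [Hq Happrox]]].
  set (u t := Im (f (polar r t))).
  assert (Hrn : 0 < r ^ n) by (apply pow_lt; lra).
  assert (HnN : forall N, (Nat.max N0 n <= N)%nat -> (1 <= n <= N)%nat) by lia.
  assert (HN0 : forall N, (Nat.max N0 n <= N)%nat -> (N0 <= N)%nat) by lia.
  split.
  - apply (le_of_forall_le_add_geometric _ _ (4 * INR n) q (Nat.max N0 n));
      [assert (Hn0 := pos_INR n); lra | exact Hq |].
    intros N HN.
    assert (H := approx_sin_coef_le u (Im (f 0%C)) _ _ N _ (fun t => Im_f_polar_sign r t Hr)
                   (fun t => Happrox N t (HN0 N HN)) n (HnN N HN)).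
    cbv beta in H. rewrite Rabs_mult, (Rabs_pos_eq (r ^ n)) in H by lra. rewrite pow_1 in H. lra.
  - assert (Hb : Rabs (Im (c n)) * r ^ n <= 0).
    { apply (le_of_forall_le_add_geometric _ _ 2 q (Nat.max N0 n)); [lra | exact Hq |].
      intros N HN.
      assert (H := approx_cos_coef_le u (Im (f 0%C)) _ _ N _ (fun t => Im_f_polar_odd r t Hr)
                     (fun t => Happrox N t (HN0 N HN)) n (HnN N HN)).
      cbv beta in H. rewrite Rabs_mult, (Rabs_pos_eq (r ^ n)) in H by lra. lra. }
    assert (Rabs (Im (c n)) = 0) by (assert (H := Rabs_pos (Im (c n))); nra).
    now apply Rabs_eq_0.
Qed.

Theorem typically_real_coef_bound (n : nat) : (1 <= n)%nat ->
  Cmod (c n) <= INR n * Cmod (c 1%nat).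
Proof.
  intros Hn.
  assert (Hhalf : 0 < 1/2 < 1) by lra.
  assert (Hre1 : Re (c 1%nat) <= 0).
  { destruct (coef_bound_on_circle (1/2) 1 Hhalf (le_n 1)) as [H _].
    assert (Hx := Rle_abs (Re (c 1%nat))). simpl in H. lra. }
  rewrite !Cmod_Im_0 by (apply (coef_bound_on_circle (1/2)); [exact Hhalf | lia]).
  rewrite (Rabs_left1 (Re (c 1%nat)) Hre1).
  apply (le_of_forall_pow_mul_le _ _ n (Rabs_pos _)). intros r Hr.
  destruct (coef_bound_on_circle r n Hr Hn) as [H _].
  assert (0 <= INR n * (- Re (c 1%nat)) * (1 - r))
    by (apply Rmult_le_pos; [apply Rmult_le_pos; [apply pos_INR|]|]; lra).
  lra.
Qed.

End TypicallyReal.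

Theorem theorem7
  (m : R) (d : nat)
  (M : C -> R -> C)            (* amplitude M(ztilde, a) *)
  (alpha : nat -> R -> C)      (* coefficients alpha_n(a) *)
  (A : R -> R -> R)            (* s-channel absorptive part A(s1; s2) *)
  (Phi : R -> R)               (* Phi(s1; alpha) *)
  (pw : nat -> R -> R)         (* partial waves a_l(s1) *)
  (a : R) :
  let mu := 4 * m ^ 2 in
  0 < m ->
  (4 <= d)%nat ->
  ((- (2 * mu / 9) < a < 0) \/ (0 < a < 4 * mu / 9)) ->
  (* crossing-symmetric dispersive representation on the unit disk *)
  (forall z : C, Cmod z < 1 ->
     exists I : C,
       is_RInt_gen (fun s : R => ((A s (s2plus s a) / s)%R * Hker a s z)%C)
                   (at_point (2 * mu / 3)) (Rbar_locally p_infty) I /\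
       M z a = (M 0%C a + (/ PI)%R * I)%C) ->
  (* power series expansion converging on |ztilde| < 1 *)
  (forall z : C, Cmod z < 1 ->
     is_series (fun n : nat => (alpha n a * (a ^ (2 * n))%R * pow_n z n)%C) (M z a)) ->
  (* unitarity *)
  (forall s : R, 2 * mu / 3 <= s ->
     0 < Phi s /\
     (forall l : nat, 0 <= pw l s <= 1) /\
     exists S : R,
       is_series (fun l : nat =>
                    (2 * INR l + 2 * gegen_index d) * pw l s
                    * gegenbauer l (gegen_index d) (sqrt (xi mu s a))) S /\
       A s (s2plus s a) = Phi s * S) ->
  (* non-triviality: M(., a) is not constant *)
  (exists n : nat, (1 <= n)%nat /\ alpha n a <> 0%C) ->
  alpha 1%nat a <> 0%C /\
  forall n : nat, (2 <= n)%nat ->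
    Cmod ((alpha n a * (a ^ (2 * n))%R) / (alpha 1%nat a * (a ^ 2)%R))%C <= INR n.
Proof.
  intros mu Hm Hd Ha Hdisp Hser Hunit [n0 [Hn0 Halpha0]].
  assert (Hmu : 0 < mu) by (unfold mu; nra).
  assert (Hpow : forall k, RtoC (a ^ k) <> 0%C)
    by (intros k H; apply (pow_nonzero a k ltac:(lra)); now injection H).
  assert (HA := absorptive_part_ge0 d mu a A Phi pw Hd ltac:(lra) ltac:(lra) Hunit).
  set (c n := (alpha n a * (a ^ (2 * n))%R)%C).
  assert (Hbound := typically_real_coef_bound (fun z => M z a) c Hser
                      (dispersion_Im_le A M a (2 * mu / 3) ltac:(lra) ltac:(lra) HA Hdisp)
                      (dispersion_Im_conj A M a (2 * mu / 3) Hdisp)).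
  assert (Hc1 : c 1%nat <> 0%C).
  { intros H1. apply (Cmult_neq_0 _ _ Halpha0 (Hpow (2 * n0)%nat)), Cmod_eq_0.
    assert (Hb := Hbound n0 Hn0). rewrite H1, Cmod_0, Rmult_0_r in Hb.
    apply Rle_antisym; [exact Hb | apply Cmod_ge_0]. }
  split.
  - intros H1. apply Hc1. unfold c. rewrite H1. apply Cmult_0_l.
  - intros n Hn. change (Cmod (c n / c 1%nat) <= INR n).
    rewrite Cmod_div by exact Hc1.
    apply Rle_div_l; [apply Cmod_gt_0, Hc1 | apply Hbound; lia].
Qed.
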